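(* Let $d\ge 2$, let $\bm{k}_1,\ldots,\bm{k}_d\in\mathbb{R}^d$ be a basis of $\mathbb{R}^d$ with $\mathsf{K}=[\bm{k}_1,\ldots,\bm{k}_d]$, and let $\mathfrak{a},\mathfrak{b}\in\mathbb{R}$. For $\bm{u}=[\alpha_1,\ldots,\alpha_d,\beta_1,\ldots,\beta_d]^T\in\mathbb{C}^{2d}$ and $\bm{x}\in\mathbb{R}^d$ let $p(\bm{x};\bm{u})=\sum_{j=1}^d\alpha_j e^{i\bm{k}_j\cdot\bm{x}}+\beta_j e^{-i\bm{k}_j\cdot\bm{x}}$, $\psi(\bm{x};\bm{u})=\mathfrak{a}|p(\bm{x};\bm{u})|^2-\mathfrak{b}|\nabla_{\bm{x}}p(\bm{x};\bm{u})|^2$, and let $\mathsf{Q}(\bm{0})$ be the Hermitian matrix with $\psi(\bm{0};\bm{u})=\bm{u}^*\mathsf{Q}(\bm{0})\bm{u}$. Fix a sign $\pm$ (with $\mp$ denoting the opposite sign), and let $\bm{u}=[\bm{v};\pm\bm{v}]$, $\bm{v}\in\mathbb{R}^d$, be a real unit-norm eigenvector of $\mathsf{Q}(\bm{0})$ with eigenvalue $\lambda$. Let $$T^\pm_{\lambda,\bm{u}}=\{\bm{s}\in\{0,1\}^d:\ [(-1)^{\bm{s}}\odot\bm{v};\mp(-1)^{\bm{s}}\odot\bm{v}]\ \text{is in the }\lambda\text{-eigenspace of }\mathsf{Q}(\bm{0})\}.$$ Then for every $\bm{n}\in\mathbb{Z}^d$ and every $\bm{s}\in T^\pm_{\lambda,\bm{u}}$,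 the set $L_{\lambda,\bm{u}}=\{\bm{x}\in\mathbb{R}^d:\psi(\bm{x};\bm{u})=\lambda\}$ contains the line $$\{\mathsf{K}^{-T}(\theta(-1)^{\bm{s}}+2\pi\bm{n}):\theta\in\mathbb{R}\}.$$
   Context: $[\bm{x};\bm{y}]$ denotes the vertical stacking of vectors $\bm{x},\bm{y}$. For $\bm{s}\in\{0,1\}^d$, $(-1)^{\bm{s}}=[(-1)^{s_1},\ldots,(-1)^{s_d}]$, and $\odot$ is the componentwise (Hadamard) product. *)

From HB Require Import structures.
From mathcomp Require Import all_boot all_order all_algebra.
From mathcomp Require Import all_classical all_reals all_analysis.
From mathcomp Require Import complex.
Set Implicit Arguments. Unset Strict Implicit. Unset Printing Implicit Defensive.
Import Order.TTheory GRing.Theory Num.Theory.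
Import numFieldNormedType.Exports.
Local Open Scope ring_scope.
Local Open Scope complex_scope.

Section Defs.
Variable R : realType.
Variable d : nat.

Definition expi (t : R) : R[i] := cos t +i* sin t.

Definition kdot (K : 'M[R]_d) (j : 'I_d) (x : 'cV[R]_d) : R :=
  \sum_(m < d) K m j * x m 0.

Definition alpha (u : 'cV[R[i]]_(d + d)) (j : 'I_d) : R[i] := u (lshift d j) 0.
Definition beta (u : 'cV[R[i]]_(d + d)) (j : 'I_d) : R[i] := u (rshift d j) 0.

Definition pfun (K : 'M[R]_d) (u : 'cV[R[i]]_(d + d)) (x : 'cV[R]_d) : R[i] :=
  \sum_(j < d) (alpha u j * expi (kdot K j x) + beta u j * expi (- kdot K j x)).

Definition csqnorm (z : R[i]) : R := complex.Re z ^+ 2 + complex.Im z ^+ 2.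

Definition gradsqnorm (K : 'M[R]_d) (u : 'cV[R[i]]_(d + d)) (x : 'cV[R]_d) : R :=
  \sum_(m < d)
    ( ('D_(delta_mx m 0) (fun y : 'cV[R]_d => complex.Re (pfun K u y)) x) ^+ 2
    + ('D_(delta_mx m 0) (fun y : 'cV[R]_d => complex.Im (pfun K u y)) x) ^+ 2).

Definition psi (a b : R) (K : 'M[R]_d) (u : 'cV[R[i]]_(d + d)) (x : 'cV[R]_d) : R :=
  a * csqnorm (pfun K u x) - b * gradsqnorm K u x.

Definition adjmx m n (A : 'M[R[i]]_(m, n)) : 'M[R[i]]_(n, m) := (map_mx conjc A)^T.

Definition cvec n (w : 'cV[R]_n) : 'cV[R[i]]_n := map_mx (fun r => r%:C) w.

Definition sgnb (b : bool) : R := (-1) ^+ b.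

Definition signflip (s : 'I_d -> bool) (v : 'cV[R]_d) : 'cV[R]_d :=
  \col_i (sgnb (s i) * v i 0).

(* membership of s in T^{+-}_{lambda,u}, sign + encoded by pm = false:
   [(-1)^s (.) v ; -+ (-1)^s (.) v] lies in the lambda-eigenspace of Q *)
Definition inT (Q : 'M[R[i]]_(d + d)) (lam : R[i]) (pm : bool) (v : 'cV[R]_d)
    (s : 'I_d -> bool) : Prop :=
  let w := cvec (col_mx (signflip s v) (sgnb (~~ pm) *: signflip s v)) in
  Q *m w = lam *: w.

End Defs.

From HB Require Import structures.
From mathcomp Require Import all_boot all_order all_algebra.
From mathcomp Require Import all_classical all_reals all_analysis.
From mathcomp Require Import complex.
From mathcomp Require Import ring.
Import Order.TTheory GRing.Theory Num.Theory.
Import numFieldNormedType.Exports.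
Set Implicit Arguments. Unset Strict Implicit. Unset Printing Implicit Defensive.
Local Open Scope ring_scope.
Local Open Scope complex_scope.

(* For u = [z; t z] the real and imaginary parts of p(x; u) are
   (1 + t) sum_j z_j cos(k_j.x) and (1 - t) sum_j z_j sin(k_j.x).  On the line
   K^T x = theta (-1)^s + 2 pi n every cos(k_j.x) equals cos theta and
   sin(k_j.x) = (-1)^(s_j) sin theta, so p and grad p there are the values at the
   origin for u and for w = [(-1)^s.z; -t (-1)^s.z], scaled by cos theta and
   sin theta respectively; hence
     psi(x; u) = cos^2 theta psi(0; u) + sin^2 theta psi(0; w).
   When u and w are unit lambda-eigenvectors of Q(0) both psi(0; .) values are
   lambda, and so is psi(x; u). *)

Lemma periodicz (U V : zmodType) (f : U -> V) (T : U) :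
  periodic f T -> forall (n : int) a, f (a + T *~ n) = f a.
Proof.
move=> fT [] k a; first exact: periodicn.
by rewrite NegzE mulrNz -[in RHS](subrK (T *+ k.+1) a) periodicn.
Qed.

Section StandingWaves.
Variable R : realType.

Lemma sgnb_sqr b : sgnb R b ^+ 2 = 1.
Proof. by rewrite /sgnb sqrr_sign. Qed.

Lemma sgnbN b : sgnb R (~~ b) = - sgnb R b.
Proof. by case: b; rewrite /sgnb ?expr0 ?expr1 ?opprK. Qed.

Lemma cos_sgnb_2pi (th : R) b (n : int) :
  cos (th * sgnb R b + 2 * pi * n%:~R) = cos th.
Proof.
rewrite mulrzr mulr_natl periodicz; last exact: cosD2pi.
by case: b; rewrite /sgnb ?expr1 ?expr0 ?mulrN1 ?mulr1 ?cosN.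
Qed.

Lemma sin_sgnb_2pi (th : R) b (n : int) :
  sin (th * sgnb R b + 2 * pi * n%:~R) = sgnb R b * sin th.
Proof.
rewrite mulrzr mulr_natl periodicz; last exact: sinD2pi.
by case: b; rewrite /sgnb ?expr1 ?expr0 ?mulrN1 ?mulN1r ?mulr1 ?mul1r ?sinN.
Qed.

Lemma derive_along (V : normedModType R) (f : V -> R) (x e : V) :
  'D_e f x = 'D_1 (fun h : R => f (h *: e + x)) 0.
Proof.
rewrite /derive; do 2 f_equal; apply/funext => h /=.
by rewrite /shift /= scale0r add0r addr0 -[h%:A]/(h * 1) mulr1.
Qed.

Lemma is_derive_comp_affine (f : R -> R) (df c k x : R) :
  is_derive (c + x * k) 1 f df -> is_derive x 1 (fun h => f (c + h * k)) (df * k).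
Proof.
move=> hf; apply: (@is_derive1_comp R f (fun h => c + h * k) x df k hf).
have -> : (fun h => c + h * k) = cst c + k \*: id by apply/funext => h /=; rewrite mulrC.
by apply: is_derive_eq; rewrite add0r -[k%:A]/(k * 1) mulr1.
Qed.

Lemma quadform_eigen n (Q : 'M[R[i]]_n) lam (y : 'cV[R]_n) :
  Q *m cvec y = lam *: cvec y ->
  (adjmx (cvec y) *m Q *m cvec y) 0 0 = lam * (\sum_i y i 0 ^+ 2)%:C.
Proof.
move=> eig; rewrite -mulmxA eig -scalemxAr mxE mxE rmorph_sum; congr (_ * _).
by apply: eq_bigr => i _; rewrite /adjmx /cvec !mxE /= expr2 rmorphM /= oppr0.
Qed.

Variable d : nat.
Implicit Types (K : 'M[R]_d) (x z : 'cV[R]_d).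

Lemma kdotE K j x : kdot K j x = (K^T *m x) j 0.
Proof. by rewrite /kdot mxE; apply: eq_bigr => m _; rewrite mxE. Qed.

Lemma kdot0 K j : kdot K j 0 = 0.
Proof. by rewrite kdotE mulmx0 mxE. Qed.

Lemma kdot_invmx_tr K j x : K \in unitmx -> kdot K j (invmx K^T *m x) = x j 0.
Proof. by move=> hK; rewrite kdotE mulmxA mulmxV ?unitmx_tr // mul1mx. Qed.

Lemma kdot_shift K j m x (h : R) :
  kdot K j (h *: delta_mx m 0 + x) = kdot K j x + h * K m j.
Proof. by rewrite !kdotE mulmxDr -scalemxAr -colE !mxE addrC. Qed.

Lemma derive_sum_kdot (f df : R -> R) (hf : forall y : R, is_derive y 1 f (df y))
    (c : R) (w : 'I_d -> R) K x m :
  'D_(delta_mx m 0) (fun y => c * \sum_j w j * f (kdot K j y)) x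
  = c * \sum_j w j * (df (kdot K j x) * K m j).
Proof.
rewrite derive_along.
have -> : (fun h : R => c * \sum_j w j * f (kdot K j (h *: delta_mx m 0 + x)))
    = c \*: \sum_j w j \*: (fun h => f (kdot K j x + h * K m j)).
  by apply/funext => h; rewrite /= fct_sumE; under eq_bigr do rewrite kdot_shift.
have hD j : is_derive (0 : R) 1 (fun h => f (kdot K j x + h * K m j)) (df (kdot K j x) * K m j).
  by apply: is_derive_comp_affine; rewrite mul0r addr0.
by rewrite derive_val.
Qed.

Definition twin z (t : R) : 'cV[R[i]]_(d + d) := cvec (col_mx z (t *: z)).

Lemma alpha_twin z t j : alpha (twin z t) j = (z j 0)%:C.
Proof. by rewrite /alpha /twin /cvec mxE col_mxEu. Qed.

Lemma beta_twin z t j : beta (twin z t) j = (t * z j 0)%:C.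
Proof. by rewrite /beta /twin /cvec mxE col_mxEd mxE. Qed.

Lemma Re_pfun_twin K z t x :
  complex.Re (pfun K (twin z t) x) = (1 + t) * \sum_j z j 0 * cos (kdot K j x).
Proof.
rewrite /pfun raddf_sum mulr_sumr; apply: eq_bigr => j _.
by rewrite alpha_twin beta_twin /expi /= cosN sinN; ring.
Qed.

Lemma Im_pfun_twin K z t x :
  complex.Im (pfun K (twin z t) x) = (1 - t) * \sum_j z j 0 * sin (kdot K j x).
Proof.
rewrite /pfun raddf_sum mulr_sumr; apply: eq_bigr => j _.
by rewrite alpha_twin beta_twin /expi /= cosN sinN; ring.
Qed.

Lemma derive_Re_pfun_twin K z t x m :
  'D_(delta_mx m 0) (fun y => complex.Re (pfun K (twin z t) y)) x
  = - (1 + t) * \sum_j K m j * z j 0 * sin (kdot K j x).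
Proof.
rewrite (funext (Re_pfun_twin K z t)) (derive_sum_kdot (@is_derive_cos R)).
by rewrite mulNr -mulrN -sumrN; congr (_ * _); apply: eq_bigr => j _; ring.
Qed.

Lemma derive_Im_pfun_twin K z t x m :
  'D_(delta_mx m 0) (fun y => complex.Im (pfun K (twin z t) y)) x
  = (1 - t) * \sum_j K m j * z j 0 * cos (kdot K j x).
Proof.
rewrite (funext (Im_pfun_twin K z t)) (derive_sum_kdot (@is_derive_sin R)).
by congr (_ * _); apply: eq_bigr => j _; ring.
Qed.

Definition psi0_twin (a b : R) K (w : 'I_d -> R) (t : R) : R :=
  a * ((1 + t) * \sum_j w j) ^+ 2 - b * \sum_m ((1 - t) * \sum_j K m j * w j) ^+ 2.

Lemma psi_twin_line_expansion a b K z t x (th : R) (tau : 'I_d -> R)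
    (hc : forall j, cos (kdot K j x) = cos th)
    (hs : forall j, sin (kdot K j x) = tau j * sin th) :
  psi a b K (twin z t) x = cos th ^+ 2 * psi0_twin a b K (fun j => z j 0) t
                         + sin th ^+ 2 * psi0_twin a b K (fun j => tau j * z j 0) (- t).
Proof.
have sum_cos (w : 'I_d -> R) : \sum_j w j * cos (kdot K j x) = cos th * \sum_j w j.
  by rewrite mulr_sumr; apply: eq_bigr => j _; rewrite hc mulrC.
have sum_sin (G F : 'I_d -> R) : (forall j, F j * tau j = G j) ->
    \sum_j F j * sin (kdot K j x) = sin th * \sum_j G j.
  by move=> FG; rewrite mulr_sumr; apply: eq_bigr => j _; rewrite hs -FG; ring.
have csq : csqnorm (pfun K (twin z t) x)
    = cos th ^+ 2 * ((1 + t) * \sum_j z j 0) ^+ 2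
    + sin th ^+ 2 * ((1 - t) * \sum_j tau j * z j 0) ^+ 2.
  rewrite /csqnorm Re_pfun_twin Im_pfun_twin sum_cos (sum_sin (fun j => tau j * z j 0)).
    by ring.
  by move=> j; ring.
have grad m :
    ('D_(delta_mx m 0) (fun y => complex.Re (pfun K (twin z t) y)) x) ^+ 2
  + ('D_(delta_mx m 0) (fun y => complex.Im (pfun K (twin z t) y)) x) ^+ 2
  = cos th ^+ 2 * ((1 - t) * \sum_j K m j * z j 0) ^+ 2
  + sin th ^+ 2 * ((1 + t) * \sum_j K m j * (tau j * z j 0)) ^+ 2.
  rewrite derive_Re_pfun_twin derive_Im_pfun_twin sum_cos.
  rewrite (sum_sin (fun j => K m j * (tau j * z j 0))); first by ring.
  by move=> j; ring.
rewrite /psi /gradsqnorm csq (eq_bigr _ (fun m _ => grad m)) big_split /=.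
by rewrite -!mulr_sumr /psi0_twin opprK; ring.
Qed.

Lemma psi_twin_origin a b K z t :
  psi a b K (twin z t) 0 = psi0_twin a b K (fun j => z j 0) t.
Proof.
rewrite (@psi_twin_line_expansion _ _ _ _ _ _ 0 (fun=> 1)) => [|j|j].
- by rewrite cos0 sin0 expr1n expr0n mul1r mul0r addr0.
- by rewrite kdot0.
- by rewrite kdot0 sin0 mulr0.
Qed.

Lemma psi_twin_on_line a b K z t x (th : R) (tau : 'I_d -> R) :
    (forall j, cos (kdot K j x) = cos th) ->
    (forall j, sin (kdot K j x) = tau j * sin th) ->
  psi a b K (twin z t) x = cos th ^+ 2 * psi a b K (twin z t) 0
                         + sin th ^+ 2 * psi a b K (twin (\col_j (tau j * z j 0)) (- t)) 0.
Proof.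
move=> hc hs; rewrite (psi_twin_line_expansion _ _ _ _ hc hs) !psi_twin_origin.
by congr (_ + _ * psi0_twin _ _ _ _ _); apply/funext => j; rewrite mxE.
Qed.

Lemma sqnorm_col_scale z t :
  \sum_(i < d + d) col_mx z (t *: z) i 0 ^+ 2 = (1 + t ^+ 2) * \sum_j z j 0 ^+ 2.
Proof.
rewrite big_split_ord mulrDl mul1r mulr_sumr; congr (_ + _).
  by apply: eq_bigr => j _; rewrite col_mxEu.
by apply: eq_bigr => j _; rewrite col_mxEd mxE exprMn.
Qed.

Lemma sqnorm_signflip s z : \sum_j signflip s z j 0 ^+ 2 = \sum_j z j 0 ^+ 2.
Proof. by apply: eq_bigr => j _; rewrite mxE exprMn sgnb_sqr mul1r. Qed.

Lemma psi_twin_origin_eigen a b K (Q : 'M[R[i]]_(d + d)) lam z t :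
    (forall u, (psi a b K u 0)%:C = (adjmx u *m Q *m u) 0 0) ->
    Q *m twin z t = lam *: twin z t ->
    \sum_i col_mx z (t *: z) i 0 ^+ 2 = 1 ->
  (psi a b K (twin z t) 0)%:C = lam.
Proof. by move=> hQ eig unit; rewrite hQ (quadform_eigen eig) unit mulr1. Qed.

End StandingWaves.

Theorem lemma2p7 (R : realType) (d : nat) (hd : (2 <= d)%N)
    (K : 'M[R]_d) (hK : K \in unitmx) (a b : R)
    (Q : 'M[R[i]]_(d + d))
    (hQherm : adjmx Q = Q)
    (hQ : forall u : 'cV[R[i]]_(d + d),
        (psi a b K u 0)%:C = (adjmx u *m Q *m u) 0 0)
    (pm : bool) (v : 'cV[R]_d) (lam : R[i])
    (hunit : \sum_(i < d + d) (col_mx v (sgnb R pm *: v) i 0) ^+ 2 = 1)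
    (heig : Q *m cvec (col_mx v (sgnb R pm *: v))
            = lam *: cvec (col_mx v (sgnb R pm *: v)))
    (n : 'I_d -> int) (s : 'I_d -> bool) (hs : inT Q lam pm v s)
    (theta : R) :
  (psi a b K (cvec (col_mx v (sgnb R pm *: v)))
     (invmx K^T *m \col_j (theta * sgnb R (s j) + 2 * pi * (n j)%:~R)))%:C = lam.
Proof.
set t := sgnb R pm; rewrite -/(twin v t).
set x := invmx K^T *m _.
have hv : (psi a b K (twin v t) 0)%:C = lam := psi_twin_origin_eigen hQ heig hunit.
have hw : (psi a b K (twin (signflip s v) (- t)) 0)%:C = lam.
  apply: psi_twin_origin_eigen hQ _ _; first by rewrite /inT /= sgnbN in hs.
  by rewrite sqnorm_col_scale sqrrN sqnorm_signflip -sqnorm_col_scale.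
have kdot_x j : kdot K j x = theta * sgnb R (s j) + 2 * pi * (n j)%:~R.
  by rewrite kdot_invmx_tr // mxE.
have cos_x j : cos (kdot K j x) = cos theta by rewrite kdot_x cos_sgnb_2pi.
have sin_x j : sin (kdot K j x) = sgnb R (s j) * sin theta.
  by rewrite kdot_x sin_sgnb_2pi.
rewrite (psi_twin_on_line _ _ _ _ cos_x sin_x).
have -> : psi a b K (twin (signflip s v) (- t)) 0 = psi a b K (twin v t) 0.
  by have := congr1 (@complex.Re R) (etrans hw (esym hv)).
by rewrite -mulrDl cos2Dsin2 mul1r.
Qed.
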